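(* Let $M\in SL(N,\mathbb Z)$ be of type $\mathcal J_0$, with notation as in the context. Then the lattice $\mathcal L$ generated by $v_1,\dots,v_N$ is invariant under $g_0$, and the matrix of $g_0$ in the basis $(v_1,\dots,v_N)$ equals $M^\top$, i.e. $g_0(v_i)=\sum_{k}M_{ik}v_k$ for all $i$.
   Context: $M\in SL(N,\mathbb Z)$ is of type $\mathcal J_0$ if its characteristic polynomial has at least one real root, at least one non-real root, and all real roots simple. Let $\alpha_1,\dots,\alpha_s$ be the real eigenvalues, $N=s+2n$, and $a_1,\dots,a_s\in\mathbb R^N$ corresponding eigenvectors. Choose one eigenvalue in each complex-conjugate pair of non-real eigenvalues and let $W\subset\mathbb C^N$ be the sum of the generalized eigenspaces of $M$ for the chosen eigenvalues, so $\dim_{\mathbb C}W=n$. Fix a basis $b_1,\dots,b_n$ of $W$ and let $R$ be the matrix of the restriction of $M$ to $W$ in this basis. For $1\le i\le N$ put $v_i=(a_1^{(i)},\dots,a_s^{(i)},b_1^{(i)},\dots,b_n^{(i)})\in\mathbb R^s\times\mathbb C^n$, where $x^{(i)}$ is the $i$-th coordinate of $x$; $(v_1,\dots,v_N)$ is a basis of the real vector space $\mathbb R^s\times\mathbb C^n$. Define $g_0:\mathbb R^s\times\mathbb C^n\to\mathbb R^s\times\mathbb C^n$ by $g_0(w_1,\dots,w_s,z)=(\alpha_1w_1,\dots,\alpha_sw_s,R^\top z)$. *)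

From mathcomp Require Import all_boot all_algebra.
From mathcomp Require Import reals.
From mathcomp Require Import complex.
Set Implicit Arguments. Unset Strict Implicit. Unset Printing Implicit Defensive.
Import GRing.Theory Num.Theory.
Local Open Scope ring_scope.

Definition mxR (R : realType) (N : nat) (M : 'M[int]_N) : 'M[R]_N := map_mx intr M.
Definition mxC (R : realType) (N : nat) (M : 'M[int]_N) : 'M[R[i]]_N := map_mx intr M.

Definition typeJ0 (R : realType) (N : nat) (M : 'M[int]_N) : Prop :=
  [/\ exists x : R, root (char_poly (mxR R M)) x,
      exists z : R[i], root (char_poly (mxC R M)) z /\ 'Im z != 0
    & forall x : R, root (char_poly (mxR R M)) x ->
        ~~ (('X - x%:P) ^+ 2 %| char_poly (mxR R M))].

(* Membership in W = sum of generalized eigenspaces of M (acting on C^N,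
   column vectors) for the eigenvalues in the list Sel. *)
Definition inW (R : realType) (N : nat) (M : 'M[int]_N) (Sel : seq R[i])
    (w : 'cV[R[i]]_N) : Prop :=
  exists f : R[i] -> 'cV[R[i]]_N,
    (forall l, l \in Sel -> (mxC R M - l%:M) ^+ N *m f l = 0) /\
    w = \sum_(l <- Sel) f l.

(* The vectors v_i in R^s x C^n (as pairs of column vectors):
   v_i = (a_1^(i), ..., a_s^(i), b_1^(i), ..., b_n^(i)),
   where a_j is column j of A and b_l is column l of B. *)
Definition vvec (R : realType) (N s n : nat) (A : 'M[R]_(N, s)) (B : 'M[R[i]]_(N, n))
    (i : 'I_N) : 'cV[R]_s * 'cV[R[i]]_n :=
  (\col_j A i j, \col_l B i l).

Definition g0 (R : realType) (s n : nat) (alpha : 'I_s -> R) (Rm : 'M[R[i]]_n)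
    (x : 'cV[R]_s * 'cV[R[i]]_n) : 'cV[R]_s * 'cV[R[i]]_n :=
  (\col_j (alpha j * x.1 j 0), Rm^T *m x.2).

Definition inLattice (G : zmodType) (N : nat) (v : 'I_N -> G) (x : G) : Prop :=
  exists c : 'I_N -> int, x = \sum_(k < N) v k *~ c k.

From HB Require Import structures.
From mathcomp Require Import all_boot all_algebra.
From mathcomp Require Import reals complex.
Import GRing.Theory Num.Theory.
Local Open Scope ring_scope.

(** The i-th coordinates of the eigenvectors a_j and of the basis b_l of W
   form the i-th rows of A and B, and the eigen-relations M A = A diag(alpha),
   M B = B Rm say exactly that g0 v_i = sum_k M_ik v_k.  Since g0 is additive,
   it acts on integer coordinates by c |-> c M; as M is unimodular this is a
   bijection of Z^N, so g0 maps the lattice onto itself. *)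

Section LatticeEndomorphism.
Variables (G : zmodType) (N : nat) (v : 'I_N -> G) (M : 'M[int]_N).
Variable f : {additive G -> G}.
Hypothesis f_v : forall i, f (v i) = \sum_(k < N) v k *~ M i k.

Lemma inLattice_rowP x :
  inLattice v x <-> exists c : 'rV[int]_N, x = \sum_(k < N) v k *~ c 0 k.
Proof.
split=> [[c ->] | [c ->]]; last by exists (c 0).
by exists (\row_k c k); apply: eq_bigr => k _; rewrite mxE.
Qed.

Lemma additive_lattice_comb (c : 'rV[int]_N) :
  f (\sum_(k < N) v k *~ c 0 k) = \sum_(k < N) v k *~ (c *m M) 0 k.
Proof.
rewrite raddf_sum; under eq_bigr do rewrite raddfMz f_v mulrz_suml.
rewrite exchange_big; apply: eq_bigr => j _ /=.
rewrite !mxE mulrz_sumr; apply: eq_bigr => k _.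
by rewrite mulrzA_C.
Qed.

Lemma lattice_additive_onto (unimodular : M \in unitmx) y :
  inLattice v y <-> exists x, inLattice v x /\ f x = y.
Proof.
split=> [/inLattice_rowP[c ->] | [x [/inLattice_rowP[c ->] <-]]].
  exists (\sum_(k < N) v k *~ (c *m invmx M) 0 k).
  split; first by apply/inLattice_rowP; exists (c *m invmx M).
  by rewrite additive_lattice_comb mulmxKV.
by apply/inLattice_rowP; exists (c *m M); rewrite additive_lattice_comb.
Qed.

End LatticeEndomorphism.

Section G0.
Variables (R : realType) (s n : nat) (alpha : 'I_s -> R) (Rm : 'M[R[i]]_n).

Lemma g0_is_zmod_morphism : zmod_morphism (g0 alpha Rm).
Proof.
case=> a b [c d]; rewrite /g0 /=; congr pair; last by rewrite mulmxBr.
by apply/matrixP=> j k; rewrite !mxE mulrBr.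
Qed.

HB.instance Definition _ :=
  GRing.isZmodMorphism.Build _ _ (g0 alpha Rm) g0_is_zmod_morphism.

End G0.

Lemma trmx_row_intmx_mul (F : pzRingType) m n (M : 'M[int]_m) (X : 'M[F]_(m, n)) i :
  (row i (map_mx intr M *m X))^T = \sum_(k < m) (row k X)^T *~ M i k.
Proof.
apply/matrixP=> j t; rewrite !mxE summxE; apply: eq_bigr => k _.
by rewrite -scaler_int !mxE mulrzl.
Qed.

Lemma vvecE (R : realType) N s n (A : 'M[R]_(N, s)) (B : 'M[R[i]]_(N, n)) i :
  vvec A B i = ((row i A)^T, (row i B)^T).
Proof. by congr pair; apply/matrixP=> j t; rewrite !mxE. Qed.

Lemma g0_vvec {R : realType} {N s n} {M : 'M[int]_N} {alpha : 'I_s -> R}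
    {A : 'M[R]_(N, s)} {B : 'M[R[i]]_(N, n)} {Rm : 'M[R[i]]_n} :
  (forall j, mxR R M *m col j A = alpha j *: col j A) ->
  mxC R M *m B = B *m Rm ->
  forall i, g0 alpha Rm (vvec A B i) = \sum_(k < N) vvec A B k *~ M i k.
Proof.
move=> hA hRm i; rewrite [RHS]surjective_pairing !raddf_sum /=.
under [in RHS]eq_bigr do rewrite raddfMz vvecE /=.
under [in X in (_, X)]eq_bigr do rewrite raddfMz vvecE /=.
rewrite -!trmx_row_intmx_mul vvecE /g0 /=; congr pair.
  apply/matrixP=> j t; rewrite !mxE.
  have := congr1 (fun X : 'cV[R]_N => X i 0) (hA j); rewrite !mxE => <-.
  by apply: eq_bigr => k _; rewrite !mxE.
by rewrite -trmx_mul -row_mul -hRm.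
Qed.

Theorem proposition3p6
  (R : realType) (N : nat) (M : 'M[int]_N)
  (hdet : \det M = 1) (hJ0 : typeJ0 R M)
  (* real eigenvalues alpha_1..alpha_s : an injective enumeration of the real roots *)
  (s : nat) (alpha : 'I_s -> R) (halpha_inj : injective alpha)
  (halpha : forall x : R, root (char_poly (mxR R M)) x <-> exists j, alpha j = x)
  (* corresponding real eigenvectors a_j = columns of A *)
  (A : 'M[R]_(N, s))
  (hA : forall j : 'I_s, col j A != 0 /\ mxR R M *m col j A = alpha j *: col j A)
  (n : nat) (hN : N = (s + 2 * n)%N)
  (* one eigenvalue chosen from each complex-conjugate pair of non-real eigenvalues *)
  (Sel : seq R[i]) (hSel_uniq : uniq Sel)
  (hSel_root : forall z, z \in Sel -> root (char_poly (mxC R M)) z /\ 'Im z != 0)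
  (hSel_choice : forall z, root (char_poly (mxC R M)) z -> 'Im z != 0 ->
                   (z \in Sel) = (z^* \notin Sel))
  (* a basis b_1..b_n of W = columns of B *)
  (B : 'M[R[i]]_(N, n))
  (hB_in : forall l : 'I_n, inW M Sel (col l B))
  (hB_free : \rank B = n)
  (hB_span : forall w, inW M Sel w -> exists c : 'cV[R[i]]_n, w = B *m c)
  (* Rm = matrix of M restricted to W in the basis b: M b_j = sum_l Rm_{lj} b_l *)
  (Rm : 'M[R[i]]_n) (hRm : mxC R M *m B = B *m Rm) :
  (forall y, inLattice (vvec A B) y <->
             exists x, inLattice (vvec A B) x /\ g0 alpha Rm x = y) /\
  (forall i : 'I_N, g0 alpha Rm (vvec A B i) = \sum_(k < N) vvec A B k *~ M i k).
Proof.
have g0_v := g0_vvec (fun j => (hA j).2) hRm.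
have unimodular : M \in unitmx by rewrite unitmxE hdet unitr1.
split=> //; exact: lattice_additive_onto g0_v unimodular.
Qed.
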